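(* Let $B$ be an $n\times n$ matrix with integer entries such that $\mathrm{Trace}(B)\le n$. Then all eigenvalues of $B$ are real and positive if and only if $B=I+N$, where $I$ is the $n\times n$ identity matrix and $N$ is a nilpotent matrix.
   Context: Eigenvalues are taken over $\mathbb{C}$. *)

From mathcomp Require Import all_boot all_order all_algebra all_field.
Set Implicit Arguments. Unset Strict Implicit. Unset Printing Implicit Defensive.
Import GRing.Theory Num.Theory.
Local Open Scope ring_scope.

(* A square matrix N is nilpotent if some power N^k (k >= 0) is the zero matrix.
   Powers are written with iter to allow any size n (including n = 0). *)
Definition mx_nilpotent (R : pzRingType) (n : nat) (N : 'M[R]_n) : Prop :=
  exists k : nat, iter k (mulmx N) (1%:M) = 0.

Definition mxC (n : nat) (B : 'M[int]_n) : 'M[algC]_n := map_mx (fun z : int => z%:~R) B.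

(* If B = 1 + N with N nilpotent, an eigenvector of B for z is one of N for
   z - 1, and the only eigenvalue of a nilpotent matrix is 0; so every
   eigenvalue of B is 1.  Conversely, let z_1, ..., z_n be the eigenvalues of B,
   all positive reals.  Their sum tr B is at most n, and their product det B is
   a positive integer, hence at least 1.  By AM-GM,
   prod z_i <= (sum z_i / n)^n <= 1 <= prod z_i, so equality holds and all z_i
   are equal, hence all equal to 1.  Thus the characteristic polynomial of B is
   (X - 1)^n, and Cayley-Hamilton gives (B - 1)^n = 0. *)

From mathcomp Require Import all_boot all_order all_algebra all_field.
Set Implicit Arguments. Unset Strict Implicit. Unset Printing Implicit Defensive.
Import Order.TTheory GRing.Theory Num.Theory.
Local Open Scope ring_scope.

Lemma mx_nilpotentE (R : pzRingType) n (N : 'M[R]_n) :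
  mx_nilpotent N <-> exists k, N ^+ k = 0.
Proof.
by rewrite /mx_nilpotent mulmxE; split=> -[k Nk]; exists k; rewrite ?iter_mulr_1 in Nk *.
Qed.

Lemma map_mx_nilpotent (R S : pzRingType) (f : {rmorphism R -> S}) n (N : 'M[R]_n) :
  injective f -> mx_nilpotent (map_mx f N) <-> mx_nilpotent N.
Proof.
move=> inj_f.
have map_mxX k : map_mx f (N ^+ k) = map_mx f N ^+ k.
  by elim: k => [|k IHk]; rewrite ?map_mx1 // !exprS -!mulmxE map_mxM IHk.
have map_mx_eq0 (M : 'M[R]_n) : map_mx f M = 0 -> M = 0.
  move/matrixP=> fM0; apply/matrixP=> i j.
  by apply: inj_f; move: (fM0 i j); rewrite !mxE rmorph0.
split=> /mx_nilpotentE[k Nk]; apply/mx_nilpotentE; exists k.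
  by apply: map_mx_eq0; rewrite map_mxX.
by rewrite -map_mxX Nk map_mx0.
Qed.

Lemma eigenvectorX (R : pzRingType) n (A : 'M[R]_n) (v : 'rV_n) a k :
  v *m A = a *: v -> v *m A ^+ k = a ^+ k *: v.
Proof.
move=> vA; elim: k => [|k IHk]; first by rewrite mulmx1 scale1r.
by rewrite exprSr -mulmxE mulmxA IHk -scalemxAl vA scalerA exprSr.
Qed.

Lemma eigenvalue_nilpotent (F : fieldType) n (N : 'M[F]_n) a :
  mx_nilpotent N -> eigenvalue N a -> a = 0.
Proof.
case/mx_nilpotentE=> k Nk /eigenvalueP[v /(eigenvectorX k) vNk nz_v].
move: vNk; rewrite Nk mulmx0 => /esym/eqP.
by rewrite scaler_eq0 (negbTE nz_v) orbF expf_eq0 => /andP[_ /eqP].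
Qed.

Lemma eigenvalue_unipotent (F : fieldType) n (N : 'M[F]_n) a :
  mx_nilpotent N -> eigenvalue (1%:M + N) a -> a = 1.
Proof.
move=> nilN /eigenvalueP[v vA nz_v]; apply/subr0_eq.
apply: (eigenvalue_nilpotent nilN); apply/eigenvalueP; exists v => //.
by rewrite scalerBl scale1r -vA mulmxDr mulmx1 addrC addKr.
Qed.

Lemma char_poly_normal (F : closedFieldType) n (A : 'M[F]_n) :
  {r : seq F | char_poly A = \prod_(z <- r) ('X - z%:P)}.
Proof.
have [r Dchar] := closed_field_poly_normal (char_poly A).
by exists r; rewrite Dchar (monicP (char_poly_monic A)) scale1r.
Qed.

Section CharPolyRoots.

Variables (R : comNzRingType) (n : nat) (A : 'M[R]_n) (r : seq R).
Hypothesis Dchar : char_poly A = \prod_(z <- r) ('X - z%:P).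

Lemma size_char_poly_roots : size r = n.
Proof. by apply: succn_inj; rewrite -(size_prod_XsubC r id) -Dchar size_char_poly. Qed.

Lemma mxtrace_char_poly_roots : \tr A = \sum_(z <- r) z.
Proof.
case: n A size_char_poly_roots Dchar => [|m] B sz_r DcharB.
  by rewrite flatmx0 mxtrace0 (size0nil sz_r) big_nil.
apply: oppr_inj; rewrite -char_poly_trace // DcharB -coefPn_prod_XsubC ?sz_r //.
Qed.

Lemma det_char_poly_roots : \det A = \prod_(z <- r) z.
Proof.
apply: (@lreg_sign _ n); rewrite -char_poly_det Dchar coef0_prod_XsubC.
by rewrite size_char_poly_roots.
Qed.

End CharPolyRoots.

Lemma sum_le_size_prod_ge1_eq1 (F : numFieldType) (r : seq F) :
  {in r, forall x, 0 <= x} -> \sum_(x <- r) x <= (size r)%:R ->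
  1 <= \prod_(x <- r) x -> {in r, forall x, x = 1}.
Proof.
move=> r_ge0; rewrite !(big_tnth _ _ r).
set t := tnth (in_tuple r) => sum_le prod_ge x xr.
have /tnthP[i ->] : x \in in_tuple r by [].
have t_ge0 j : 0 <= t j by apply/r_ge0/mem_tnth.
have size_gt0 : (0 < size r)%N by apply: leq_ltn_trans (ltn_ord i).
set mu := (\sum_(j < size r) t j) / (size r)%:R.
have mu_ge0 : 0 <= mu by rewrite divr_ge0 ?ler0n ?sumr_ge0.
have mu_le1 : mu <= 1 by rewrite ler_pdivrMr ?ltr0n ?mul1r.
have := @leif_AGM _ _ predT t (in1W t_ge0); rewrite /= card_ord -/mu => -[le_AGM].
rewrite eq_le le_AGM (le_trans (exprn_ile1 _ mu_ge0 mu_le1) prod_ge).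
move=> /esym/forall_inP/(_ i isT)/forall_inP t_const.
have {}t_const j : t j = t i by rewrite (eqP (t_const j isT)).
move: sum_le prod_ge; rewrite !(eq_bigr _ (fun j _ => t_const j)).
rewrite sumr_const prodr_const card_ord => sum_le prod_ge.
apply: le_anti; apply/andP; split.
  by move: sum_le; rewrite -[X in _ <= X]mulr1n lerMn2r eqn0Ngt size_gt0.
by move: prod_ge; rewrite -[X in X <= _](expr1n _ (size r)) ler_pXn2r ?nnegrE.
Qed.

Lemma char_poly_XsubC_expn (R : comNzRingType) n (A : 'M[R]_n) a :
  char_poly A = ('X - a%:P) ^+ n -> (A - a%:M) ^+ n = 0.
Proof.
case: n A => [|m] A Dchar; first exact: flatmx0.
have := Cayley_Hamilton A.
by rewrite Dchar rmorphXn rmorphB /= horner_mx_X horner_mx_C.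
Qed.

Theorem mainTheorem3 (n : nat) (B : 'M[int]_n) (htr : \tr B <= n%:R) :
  (forall z : algC, eigenvalue (mxC B) z -> z \is Num.real /\ 0 < z) <->
  (exists N : 'M[int]_n, mx_nilpotent N /\ B = 1%:M + N).
Proof.
split=> [pos_eig | [N [nilN ->]] z]; last first.
  rewrite /mxC map_mxD map_mx1 => /eigenvalue_unipotent -> //.
  exact/(map_mx_nilpotent _ (@intr_inj algC)).
have [r Dchar] := char_poly_normal (mxC B).
have r_pos z : z \in r -> z \is Num.real /\ 0 < z.
  by move=> zr; apply: pos_eig; rewrite eigenvalue_root_char Dchar root_prod_XsubC.
have r_eq1 : {in r, forall z, z = 1}.
  apply: sum_le_size_prod_ge1_eq1 => [z /r_pos[_ /ltW] //||].
    rewrite -(mxtrace_char_poly_roots Dchar) (size_char_poly_roots Dchar).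
    by rewrite /mxC trace_map_mx -(rmorph_nat (intr : int -> algC)) ler_int.
  have : 0 < \prod_(z <- r) z by rewrite big_seq prodr_gt0 // => z /r_pos[].
  by rewrite -(det_char_poly_roots Dchar) /mxC det_map_mx ltr0z gtz0_ge1 ler1z.
have Dchar1 : char_poly (mxC B) = ('X - 1%:P) ^+ n.
  have Dr : r = nseq (size r) 1 by apply/all_pred1P/allP => z /r_eq1/eqP.
  by rewrite Dchar Dr big_nseq iter_mulr_1 (size_char_poly_roots Dchar).
exists (B - 1%:M); split; last by rewrite addrC subrK.
apply/(map_mx_nilpotent _ (@intr_inj algC))/mx_nilpotentE; exists n.
by rewrite map_mxB map_mx1; apply: char_poly_XsubC_expn.
Qed.
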